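(* Let $q\in K$ with $|q-1|<\omega$. Let $\{\lambda_n\}_{n\in\mathbb{J}}$ be a family with $\lambda_n\in\mathbf{W}(\mathcal{O}_K)$ and phantom vectors $(\phi_{n,0},\phi_{n,1},\dots)$. Then the formal power series $$a^+(T):=\exp\Big(\sum_{n\in\mathbb{J}}\sum_{m\ge0}\phi_{n,m}\,(q^{np^m}-1)\,\frac{T^{np^m}}{p^m}\Big)\in K[[T]]$$ belongs to $\mathcal{E}_K$.
   Context: $K$ is a field of characteristic $0$, complete for a discrete non-archimedean absolute value, residue field of characteristic $p>0$; $\mathcal{O}_K$ its ring of integers; $\omega=|p|^{1/(p-1)}$. $\mathcal{E}_K$ is the ring of Laurent series $\sum a_iT^i$ over $K$ with $\sup|a_i|<\infty$ and $|a_i|\to0$ as $i\to-\infty$. $\mathbb{J}=\{n\ge1:p\nmid n\}$. $\mathbf{W}(\mathcal{O}_K)$ is the ring of $p$-typical Witt vectors over $\mathcal{O}_K$; the phantom vector of $\lambda=(\lambda_0,\lambda_1,\ldots)$ is $\phi_m=\sum_{i=0}^mp^i\lambda_i^{p^{m-i}}$. *)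

From HB Require Import structures.
From mathcomp Require Import all_boot all_order all_algebra.
From mathcomp Require Import reals exp.
Set Implicit Arguments. Unset Strict Implicit. Unset Printing Implicit Defensive.
Import Order.TTheory GRing.Theory Num.Theory.
Local Open Scope ring_scope.

Record complete_discrete_nonarch (R : realType) (K : fieldType) (abs : K -> R)
  : Prop := {
  abs_ge0 : forall x, 0 <= abs x;
  abs_eq0 : forall x, (abs x == 0) = (x == 0);
  absM : forall x y, abs (x * y) = abs x * abs y;
  abs_ultra : forall x y, abs (x + y) <= Num.max (abs x) (abs y);
  abs_discrete : exists pi : K, [/\ pi != 0, abs pi < 1 &
      forall x, x != 0 -> exists k : int, abs x = abs pi ^ k];
  abs_complete : forall u : nat -> K,
      (forall e : R, 0 < e -> exists N, forall m n, (N <= m)%N -> (N <= n)%N ->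
          abs (u m - u n) < e) ->
      exists l : K, forall e : R, 0 < e -> exists N, forall n, (N <= n)%N ->
          abs (u n - l) < e
}.

Definition omega (R : realType) (K : fieldType) (abs : K -> R) (p : nat) : R :=
  powR (abs p%:R) ((p.-1)%:R^-1).

Definition phantom (K : fieldType) (p : nat) (lam : nat -> K) (m : nat) : K :=
  \sum_(i < m.+1) (p ^ i)%N%:R * lam i ^+ (p ^ (m - i))%N.

Definition inJ (p n : nat) : bool := (0 < n)%N && ~~ (p %| n)%N.

(* Coefficient of T^N of the power series
   sum_{n in J} sum_{m >= 0} phi_{n,m} (q^(n p^m) - 1) T^(n p^m) / p^m.
   Only pairs with n p^m = N contribute, and those have n, m <= N. *)
Definition log_series (K : fieldType) (p : nat) (q : K)
    (lam : nat -> nat -> K) (N : nat) : K :=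
  \sum_(n < N.+1) \sum_(m < N.+1)
     if inJ p n && (n * p ^ m == N)%N then
       phantom p (lam n) m * (q ^+ (n * p ^ m) - 1) / (p ^ m)%N%:R
     else 0.

(* Formal exponential of a power series f (coefficient sequence) with f 0 = 0:
   the coefficient of T^N of exp f = sum_k f^k / k! only involves k <= N and
   the coefficients of f of index <= N. *)
Definition exp_series (K : fieldType) (f : nat -> K) (N : nat) : K :=
  (\sum_(k < N.+1) (k`!%:R)^-1 *: (\poly_(i < N.+1) f i) ^+ k)`_N.

Definition in_EK (R : realType) (K : fieldType) (abs : K -> R) (a : int -> K)
  : Prop :=
  (exists M : R, forall i, abs (a i) <= M) /\
  (forall e : R, 0 < e -> exists N : nat, forall i : int,
      i <= - (N%:Z) -> abs (a i) < e).

Definition laurent_of_ps (K : fieldType) (a : nat -> K) (i : int) : K :=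
  match i with Posz n => a n | Negz _ => 0 end.

From Pilot Require Import Defs.
From HB Require Import structures.
From mathcomp Require Import all_boot all_order all_algebra.
From mathcomp Require Import reals exp.
From mathcomp Require Import zify.
Import Order.TTheory GRing.Theory Num.Theory.
Local Open Scope ring_scope.
Set Implicit Arguments.
Unset Strict Implicit.

(* Put r := |q - 1|; then r < omega means r^(p-1) < |p|.  Expanding (1 + x)^p
   shows |y^p - 1| <= |p| |y - 1| whenever |y - 1| <= r, so
   |q^(n p^m) - 1| <= |p|^m r and every coefficient of the logarithm has
   absolute value at most r.  The coefficient of T^N in exp is a sum of terms
   (k!)^-1 (coefficient of f^k), bounded by r^k / |k!|; Legendre's formula
   v_p(k!) <= k / (p - 1) gives |k!| >= |p|^(k/(p-1)) >= r^k.  Hence all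
   coefficients lie in the unit ball, and a bounded power series is in E_K. *)

Lemma legendre_sum_le (p n : nat) : (0 < p)%N -> forall k,
  (p.-1 * (\sum_(1 <= j < k.+1) n %/ p ^ j) + n %/ p ^ k <= n)%N.
Proof.
case: p => // p _ /=; elim=> [|k IH].
  by rewrite big_geq // expn0 divn1 muln0.
rewrite big_nat_recr //=.
have : (n %/ p.+1 ^ k.+1 * p.+1 <= n %/ p.+1 ^ k)%N.
  by rewrite expnSr divnMA leq_divM.
move: IH; set S := (\sum_(_ <= _ < _) _)%N; set a := (n %/ _)%N; set b := (n %/ _)%N.
lia.
Qed.

Lemma logn_fact_le (p k : nat) : prime p -> (p.-1 * logn p k`! <= k)%N.
Proof.
move=> hp; rewrite logn_fact //.
exact: leq_trans (leq_addr _ _) (@legendre_sum_le p k (prime_gt0 hp) k).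
Qed.

Section Ultrametric.
Variables (R : realType) (K : fieldType) (abs : K -> R).
Hypothesis habs : complete_discrete_nonarch abs.

Let abs_nneg := Defs.abs_ge0 habs.
Let abs_mul := absM habs.

Lemma abs0 : abs 0 = 0.
Proof. by apply/eqP; rewrite (abs_eq0 habs). Qed.

Lemma abs1 : abs 1 = 1.
Proof.
have nz : abs 1 != 0 by rewrite (abs_eq0 habs) oner_eq0.
by apply: (mulfI nz); rewrite mulr1 -abs_mul mulr1.
Qed.

Lemma absN x : abs (- x) = abs x.
Proof.
have absN1 : abs (-1) = 1.
  have sq : abs (-1) ^+ 2 = 1 by rewrite expr2 -abs_mul mulrNN mulr1 abs1.
  by apply/eqP; rewrite -(@eqrXn2 _ 2) // sq expr1n.
by rewrite -mulN1r abs_mul absN1 mul1r.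
Qed.

Lemma absX x n : abs (x ^+ n) = abs x ^+ n.
Proof. by elim: n => [|n IH]; rewrite ?abs1 // !exprS abs_mul IH. Qed.

Lemma absV x : abs x^-1 = (abs x)^-1.
Proof.
have [->|nz] := eqVneq x 0; first by rewrite invr0 abs0 invr0.
have nz' : abs x != 0 by rewrite (abs_eq0 habs).
by apply: (mulfI nz'); rewrite -abs_mul !divff // abs1.
Qed.

Lemma abs_sum_le (I : Type) (r : seq I) (P : pred I) (F : I -> K) (B : R) :
  0 <= B -> (forall i, P i -> abs (F i) <= B) ->
  abs (\sum_(i <- r | P i) F i) <= B.
Proof.
move=> B0 hF; apply: (big_ind (fun x => abs x <= B)) => //; first by rewrite abs0.
move=> x y hx hy; apply: le_trans (abs_ultra habs x y) _.
by rewrite ge_max hx hy.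
Qed.

Lemma abs_natr_le1 n : abs (n%:R : K) <= 1.
Proof.
elim: n => [|n IH]; first by rewrite abs0.
rewrite -addn1 natrD; apply: le_trans (abs_ultra habs _ _) _.
by rewrite ge_max IH abs1 lexx.
Qed.

Lemma abs_mulr_natl_le n x : abs (n%:R * x) <= abs x.
Proof. by rewrite abs_mul ler_piMl ?abs_natr_le1. Qed.

Lemma abs_le1_of_sub1 y : abs (y - 1) <= 1 -> abs y <= 1.
Proof.
move=> hy; have := abs_ultra habs (y - 1) 1; rewrite subrK => /le_trans; apply.
by rewrite ge_max hy abs1 lexx.
Qed.

Lemma abs_expr_sub1_le y n :
  abs (y - 1) <= 1 -> abs (y ^+ n - 1) <= abs (y - 1).
Proof.
move=> hy; rewrite subrX1 abs_mul ler_piMr //.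
apply: abs_sum_le => // i _; rewrite absX exprn_ile1 //.
exact: abs_le1_of_sub1.
Qed.

Lemma abs_coef_exprn_le (P : {poly K}) (r : R) :
  0 <= r -> (forall i, abs P`_i <= r) -> forall k j, abs (P ^+ k)`_j <= r ^+ k.
Proof.
move=> r0 hP; elim=> [|k IH] j.
  by rewrite expr0 coef1; case: (j == 0%N); rewrite ?abs1 ?abs0.
rewrite exprS coefM exprS; apply: abs_sum_le; first by rewrite mulr_ge0 ?exprn_ge0.
by move=> i _; rewrite abs_mul ler_pM.
Qed.

Lemma in_EK_laurent_of_ps (a : nat -> K) (M : R) :
  (forall n, abs (a n) <= M) -> in_EK abs (laurent_of_ps a).
Proof.
move=> ha; have M0 : 0 <= M := le_trans (abs_nneg _) (ha 0%N).
split; first by exists M => -[n|n] //=; rewrite abs0.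
move=> e e0; exists 1%N => -[n|n] hn /=; last by rewrite abs0.
by move: hn; lia.
Qed.

Lemma omega_exprn_pred p : (1 < p)%N -> omega abs p ^+ p.-1 = abs p%:R.
Proof.
move=> p_gt1; have nz : (p.-1%:R : R) != 0 by rewrite pnatr_eq0; lia.
by rewrite /omega -powR_mulrn ?powR_ge0 // -powRrM mulVf // powRr1.
Qed.

Section ResidueCharacteristic.
Variable p : nat.
Hypotheses (hp : prime p) (hres : abs p%:R < 1).

Lemma abs_natr_coprime m : coprime p m -> (0 < m)%N -> 1 <= abs (m%:R : K).
Proof.
move=> cop m0; case: (egcdnP p m0) => u v bezout _.
rewrite gcdnC (eqP cop) in bezout.
have small : abs ((v * p)%N%:R : K) < 1.
  by rewrite natrM; apply: le_lt_trans (abs_mulr_natl_le _ _) hres.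
have unit : 1 <= abs ((v * p)%N%:R + 1 : K).
  have := abs_ultra habs ((v * p)%N%:R + 1) (- (v * p)%N%:R).
  rewrite addrC addKr abs1 absN le_max => /orP[//|/(lt_le_trans small)].
  by rewrite ltxx.
apply: le_trans unit _; rewrite natr1 -addn1 -bezout natrM.
exact: abs_mulr_natl_le.
Qed.

Lemma exprn_pred_lt_abs_p (x : R) :
  0 <= x -> x < omega abs p -> x ^+ p.-1 < abs p%:R.
Proof.
have p_gt1 := prime_gt1 hp.
move=> x0 x_lt; rewrite -(omega_exprn_pred p_gt1) ltrXn2r ?powR_ge0 //; lia.
Qed.

Lemma le1_of_lt_omega (x : R) : 0 <= x -> x < omega abs p -> x <= 1.
Proof.
move=> x0 x_lt; rewrite leNgt; apply/negP => x_gt1.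
have := lt_trans (exprn_pred_lt_abs_p x0 x_lt) hres.
by rewrite ltNge exprn_ege1 ?ltW.
Qed.

Variable r : R.
Hypotheses (r_ge0 : 0 <= r) (r_le1 : r <= 1) (hr : r ^+ p.-1 <= abs p%:R).

Lemma abs_fact_ge k : r ^+ k <= abs (k`!%:R : K).
Proof.
case: (pfactor_coprime hp (fact_gt0 k)) => m cop def_k.
have m0 : (0 < m)%N by move: (fact_gt0 k); rewrite def_k muln_gt0 => /andP[].
rewrite def_k natrM abs_mul natrX absX.
rewrite -[r ^+ k]mulr1 mulrC ler_pM ?exprn_ge0 ?abs_natr_coprime //.
apply: le_trans (_ : (r ^+ p.-1) ^+ logn p k`! <= _).
  by rewrite -exprM ler_wiXn2l // logn_fact_le.
by rewrite lerXn2r ?nnegrE ?exprn_ge0.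
Qed.

Lemma abs_exprp_sub1_le (y : K) (s : R) :
  abs (y - 1) <= s -> s <= r -> abs (y ^+ p - 1) <= abs p%:R * s.
Proof.
move=> hys hsr; have s0 : 0 <= s := le_trans (abs_nneg _) hys.
have y_near1 : abs (y - 1) <= 1 by apply: le_trans hys (le_trans hsr r_le1).
rewrite -[y](subrK 1) exprD1n big_ord_recl /= expr0 bin0 mulr1n addrAC subrr add0r.
apply: abs_sum_le; first by rewrite mulr_ge0.
move=> i _; rewrite -mulr_natr abs_mul absX /bump /= add1n.
have := ltn_ord i; rewrite leq_eqVlt => /orP[/eqP ip|ltip].
  have p_eq : p = p.-1.+1 by rewrite prednK // prime_gt0.
  rewrite ip binn abs1 mulr1 {1}p_eq exprS mulrC ler_pM ?exprn_ge0 ?abs_nneg //.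
  by apply: le_trans hr; rewrite lerXn2r ?nnegrE ?abs_nneg ?(le_trans hys).
have /dvdnP[c ->] : (p %| 'C(p, i.+1))%N by rewrite prime_dvd_bin.
rewrite natrM mulrC ler_pM ?exprn_ge0 ?abs_nneg ?abs_mulr_natl_le //.
rewrite exprS; apply: le_trans _ hys.
by rewrite ler_piMr ?abs_nneg ?exprn_ile1 ?abs_nneg.
Qed.

Lemma abs_exprpn_sub1_le (y : K) m :
  abs (y - 1) <= r -> abs (y ^+ (p ^ m) - 1) <= abs p%:R ^+ m * abs (y - 1).
Proof.
move=> hy; elim: m => [|m IH]; first by rewrite expn0 expr1 expr0 mul1r.
rewrite expnSr exprM exprS -mulrA.
apply: abs_exprp_sub1_le IH _; apply: le_trans _ hy.
by rewrite ler_piMl ?abs_nneg ?exprn_ile1 ?abs_nneg ?ltW.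
Qed.

Lemma abs_phantom_le1 (lam : nat -> K) m :
  (forall i, abs (lam i) <= 1) -> abs (Defs.phantom p lam m) <= 1.
Proof.
move=> hlam; apply: abs_sum_le => // i _.
by apply: le_trans (abs_mulr_natl_le _ _) _; rewrite absX exprn_ile1.
Qed.

Lemma abs_log_series_le (q : K) (lam : nat -> nat -> K) :
  [pchar K] =i pred0 -> abs (q - 1) <= r ->
  (forall n i, inJ p n -> abs (lam n i) <= 1) ->
  forall N, abs (log_series p q lam N) <= abs (q - 1).
Proof.
move=> hchar0 hq hlam N.
have p_neq0 : (p%:R : K) != 0 by have := hchar0 p; rewrite !inE hp /= => ->.
have pm_neq0 m : abs (p ^ m)%N%:R != 0.
  by rewrite (abs_eq0 habs) natrX expf_neq0.
apply: abs_sum_le => // n _; apply: abs_sum_le => // m _.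
case: ifP => [/andP[hJ _]|_]; last by rewrite abs0.
have hqm := abs_exprpn_sub1_le m hq.
have hqm1 : abs (q ^+ (p ^ m) - 1) <= 1.
  apply: le_trans hqm (le_trans _ (le_trans hq r_le1)).
  by rewrite ler_piMl ?abs_nneg ?exprn_ile1 ?abs_nneg ?ltW.
rewrite abs_mul absV ler_pdivrMr ?lt0r ?abs_nneg ?pm_neq0 //.
rewrite abs_mul mulnC exprM natrX absX [_ * abs p%:R ^+ _]mulrC.
have lam_le1 i : abs (lam n i) <= 1 := hlam n i hJ.
rewrite -[X in _ <= X]mul1r ler_pM ?abs_nneg ?abs_phantom_le1 //.
exact: le_trans (abs_expr_sub1_le n hqm1) hqm.
Qed.

Lemma abs_exp_series_le1 (f : nat -> K) N :
  (forall i, abs (f i) <= r) -> abs (exp_series f N) <= 1.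
Proof.
move=> hf; rewrite /exp_series coef_sum; apply: abs_sum_le => // k _.
rewrite coefZ abs_mul absV.
have [->|fact_neq0] := eqVneq (abs (k`!%:R : K)) 0; first by rewrite invr0 mul0r.
rewrite mulrC ler_pdivrMr ?lt0r ?fact_neq0 ?abs_nneg // mul1r.
apply: le_trans (abs_fact_ge k).
apply: abs_coef_exprn_le => // i; rewrite coef_poly.
by case: ifP; rewrite ?abs0.
Qed.

End ResidueCharacteristic.

End Ultrametric.

Theorem lemma5p4p4 (R : realType) (K : fieldType) (abs : K -> R) (p : nat)
  (hp : prime p)
  (hchar0 : [pchar K] =i pred0)
  (habs : complete_discrete_nonarch abs)
  (hres : abs p%:R < 1)
  (q : K) (hq : abs (q - 1) < omega abs p)
  (lam : nat -> nat -> K)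
  (hlam : forall n i, inJ p n -> abs (lam n i) <= 1) :
  in_EK abs (laurent_of_ps (exp_series (log_series p q lam))).
Proof.
have r_ge0 : 0 <= abs (q - 1) := Defs.abs_ge0 habs _.
have r_le1 := le1_of_lt_omega habs hp hres r_ge0 hq.
have hr := ltW (exprn_pred_lt_abs_p habs hp hres r_ge0 hq).
apply: (in_EK_laurent_of_ps habs (M := 1)) => N.
apply: (abs_exp_series_le1 habs hp hres r_ge0 r_le1 hr) => i.
exact: (abs_log_series_le habs hp hres r_ge0 r_le1 hr hchar0 (lexx _) hlam i).
Qed.
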